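(* Let $d\ge 1$ and $2\le n_1\le n_2\le\cdots\le n_d$ be integers, and let $G=K_{n_1}\times K_{n_2}\times\cdots\times K_{n_d}$. Then $\sigma_T(G)=2d-1$ if $n_1=2$, and $\sigma_T(G)=2d$ if $n_1\ge 3$.
   Context: $K_n$ is the complete graph on $n$ vertices and $\times$ is the Cartesian product of graphs. Thus $G$ has vertex set $\{(x_1,\dots,x_d): x_i\in\{0,1,\dots,n_i-1\}\}$, two vertices being adjacent iff they differ in exactly one coordinate (a Hamming graph). For a spanning tree $T$ of a connected graph $G$, $d_T(u,v)$ is the distance between $u$ and $v$ in $T$, $\sigma_T(G,T):=\max_{uv\in E(G)} d_T(u,v)$, and the tree-stretch is $\sigma_T(G):=\min\{\sigma_T(G,T): T \text{ a spanning tree of } G\}$. *)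

From mathcomp Require Import all_boot.
Set Implicit Arguments. Unset Strict Implicit. Unset Printing Implicit Defensive.

(* Vertices of K_{n_0} x ... x K_{n_{d-1}}: tuples x with x_i in {0,..,n_i - 1}.
   Only the values n 0, ..., n (d-1) of n : nat -> nat are relevant. *)
Definition hvert (d : nat) (n : nat -> nat) : finType :=
  {dffun forall i : 'I_d, 'I_(n i)}.

Definition hadj d n (u v : hvert d n) : bool :=
  #|[set i : 'I_d | nat_of_ord (u i) != nat_of_ord (v i)]| == 1.

Section Graphs.
Variable V : finType.

Definition erel (E : {set V * V}) : rel V := fun u v => (u, v) \in E.

(* E is (the arc set of) a spanning tree of the graph with adjacency g:
   E is a symmetric subgraph of g, connected, and acyclic (every edge is a
   bridge: deleting it disconnects its endpoints). *)
Definition spanning_tree (g : rel V) (E : {set V * V}) : bool :=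
  [&& [forall u, forall v, ((u, v) \in E) ==> g u v],
      [forall u, forall v, ((u, v) \in E) ==> ((v, u) \in E)],
      [forall u, forall v, connect (erel E) u v] &
      [forall u, forall v, ((u, v) \in E) ==>
          ~~ connect (erel (E :\ (u, v) :\ (v, u))) u v]].

Definition walk_len (E : {set V * V}) (k : nat) (u v : V) : bool :=
  [exists p : k.-tuple V, path (erel E) u p && (last u p == v)].

(* distance in E: least k with a walk of length k (#|V| if none) *)
Definition dist (E : {set V * V}) (u v : V) : nat :=
  find (fun k => walk_len E k u v) (iota 0 #|V|).

Definition stretch (g : rel V) (E : {set V * V}) : nat :=
  \max_(p : V * V | g p.1 p.2) dist E p.1 p.2.

(* sigma_T(G) = min over spanning trees T of sigma_T(G, T)
   (the default #|V| is never reached once a spanning tree exists) *)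
Definition tree_stretch (g : rel V) : nat :=
  \big[minn/#|V|]_(E : {set V * V} | spanning_tree g E) stretch g E.
End Graphs.

From mathcomp Require Import all_boot zify.
Set Implicit Arguments. Unset Strict Implicit. Unset Printing Implicit Defensive.

(* Upper bound: root a tree at a vertex r and let the parent of x reset to r
   the last coordinate in which x differs from r.  The tree path between the
   ends of an edge xy of G changing coordinate k passes through the common
   truncation of x and y to their first k coordinates, so its length is at most
   2(d-k-1) + [x_k <> r_k] + [y_k <> r_k] <= 2d; when k = 0 and n_0 = 2 one of
   x_0, y_0 equals r_0, which leaves 2d - 1.

   Lower bound: suppose every edge of G has tree distance < t in a spanning
   tree T.  Let R_c be the vertices differing from c in every coordinate (for
   t = 2d - 1, those at Hamming distance >= d - 1 from c).  R_c is connected by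
   edges xy with d(x,c) + d(c,y) >= t, whose tree paths therefore avoid c, so
   R_c lies in a single branch of T - c, entered through a neighbour c' of c.
   Adjacent vertices have a common point in their sets R (for t = 2d this needs
   n_i >= 3), hence the branch chosen at c' does not point back to c and is
   strictly smaller than the one at c, which cannot go on forever. *)

Section Walks.
Variable V : finType.
Implicit Types (E : {set V * V}) (g : rel V).

Lemma walk_lenP E k u v :
  reflect (exists p : seq V, [/\ size p = k, path (erel E) u p & last u p = v])
          (walk_len E k u v).
Proof.
apply: (iffP existsP) => [[p /andP[pP /eqP pL]] | [p [pS pP pL]]].
  by exists (val p); rewrite size_tuple.
have pS' : size p == k by rewrite pS.
by exists (Tuple pS'); rewrite /= pP pL eqxx.
Qed.

Lemma walk_len0 E u : walk_len E 0 u u.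
Proof. by apply/walk_lenP; exists [::]. Qed.

Lemma walk_len1 E u v : (u, v) \in E -> walk_len E 1 u v.
Proof. by move=> uv; apply/walk_lenP; exists [:: v]; rewrite /= /erel uv. Qed.

Lemma walk_len_cat E k1 k2 u w v :
  walk_len E k1 u w -> walk_len E k2 w v -> walk_len E (k1 + k2) u v.
Proof.
move=> /walk_lenP[p [<- pP pL]] /walk_lenP[q [<- qP qL]].
by apply/walk_lenP; exists (p ++ q); rewrite size_cat cat_path last_cat pP pL qP.
Qed.

Lemma walk_len_sym E k u v :
  (forall a b, (a, b) \in E -> (b, a) \in E) ->
  walk_len E k u v -> walk_len E k v u.
Proof.
move=> symE /walk_lenP[p [pS pP pL]]; apply/walk_lenP.
exists (rev (belast u p)); split; first by rewrite size_rev size_belast.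
  by rewrite -pL rev_path; apply: sub_path pP => a b; apply: symE.
by case: p pS pP pL => [|a p] _ _ /= <- //; rewrite rev_cons last_rcons.
Qed.

Lemma walk_len_connect E k u v : walk_len E k u v -> connect (erel E) u v.
Proof. by case/walk_lenP => p [_ pP pL]; apply/connectP; exists p. Qed.

Lemma dist_le E k u v : walk_len E k u v -> dist E u v <= k.
Proof.
move=> uv; rewrite /dist leqNgt; apply/negP => lt_k.
have k_lt : k < size (iota 0 #|V|) by apply: leq_trans lt_k (find_size _ _).
have := before_find 0 lt_k; rewrite nth_iota ?add0n ?uv //.
by rewrite size_iota in k_lt.
Qed.

Lemma dist_ge E t u v : t <= #|V| ->
  (forall k, k < t -> ~~ walk_len E k u v) -> t <= dist E u v.
Proof.
move=> t_le noWalk; rewrite /dist leqNgt; apply/negP => lt_t.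
have has_k : has (fun k => walk_len E k u v) (iota 0 #|V|).
  by rewrite has_find size_iota; apply: leq_trans lt_t t_le.
have := nth_find 0 has_k; rewrite nth_iota ?add0n; first exact/negP/noWalk.
by move: has_k; rewrite has_find size_iota.
Qed.

Lemma tree_stretch_le g E : spanning_tree g E -> tree_stretch g <= stretch g E.
Proof.
move=> treeE; rewrite /tree_stretch.
have : E \in index_enum {set V * V} by rewrite mem_index_enum.
elim: (index_enum _) => [//|F s IHs]; rewrite inE big_cons.
case/orP => [/eqP <-|E_s]; first by rewrite treeE geq_minl.
by case: ifP => _; [apply: leq_trans (geq_minr _ _) (IHs E_s) | exact: IHs].
Qed.

Lemma tree_stretch_ge g t : t <= #|V| ->
  (forall E, spanning_tree g E -> t <= stretch g E) -> t <= tree_stretch g.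
Proof.
move=> t_le stretch_ge; rewrite /tree_stretch; elim/big_ind: _ => //.
by move=> x y tx ty; rewrite leq_min tx ty.
Qed.

End Walks.

Section Cuts.
Variable V : finType.
Implicit Types (E : {set V * V}) (g : rel V).

Definition cut E a b := E :\ (a, b) :\ (b, a).

Lemma cutC E a b : cut E a b = cut E b a.
Proof. by apply/setP => p; rewrite !inE andbA [X in X && _]andbC -andbA. Qed.

Lemma cut_sym E a b : (forall u v, (u, v) \in E -> (v, u) \in E) ->
  symmetric (erel (cut E a b)).
Proof.
move=> symE; suff cut_symI u v : erel (cut E a b) u v -> erel (cut E a b) v u.
  by move=> u v; apply/idP/idP; apply: cut_symI.
rewrite /erel !inE !xpair_eqE => /and3P[uv_ba uv_ab /symE ->].
by rewrite andbT; apply/andP; split; [move: uv_ab | move: uv_ba];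
  apply: contra => /andP[-> ->].
Qed.

Lemma path_cut E c c' x p : c \notin x :: p ->
  path (erel E) x p -> path (erel (cut E c c')) x p.
Proof.
move=> c_notin; apply: (sub_in_path (P := predC1 c)).
  by move=> a b /= a_c b_c; rewrite /erel !inE !xpair_eqE (negbTE a_c) (negbTE b_c)
     !andbF.
by apply/allP => z z_in; apply: contraNneq c_notin => <-.
Qed.

Lemma spanning_treeP g E : reflect
  [/\ forall u v, (u, v) \in E -> g u v,
      forall u v, (u, v) \in E -> (v, u) \in E,
      forall u v, connect (erel E) u v &
      forall u v, (u, v) \in E -> ~~ connect (erel (cut E u v)) u v]
  (spanning_tree g E).
Proof.
apply: (iffP and4P) => [[subE symE connE bridgeE] | [subE symE connE bridgeE]].
  by split=> u v; [apply/implyP: (forallP (forallP subE u) v)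
    | apply/implyP: (forallP (forallP symE u) v) | apply: (forallP (forallP connE u) v)
    | apply/implyP: (forallP (forallP bridgeE u) v)].
by split; apply/forallP => u; apply/forallP => v; rewrite ?connE //; apply/implyP;
  [apply: subE | apply: symE | apply: bridgeE].
Qed.

Lemma spanning_tree_adj g E u v : spanning_tree g E -> (u, v) \in E -> g u v.
Proof. by case/spanning_treeP => + _ _ _; apply. Qed.

End Cuts.

Section TreeBranches.
Variables (V : finType) (g : rel V) (E : {set V * V}).
Hypothesis g_irrefl : irreflexive g.
Hypothesis treeE : spanning_tree g E.

Definition branch c c' y := connect (erel (cut E c c')) c' y.

Let bridgeE u v : (u, v) \in E -> ~~ connect (erel (cut E u v)) u v.
Proof. by case/spanning_treeP: treeE => _ _ _; apply. Qed.
Let cut_symE a b : symmetric (erel (cut E a b)).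
Proof. by case/spanning_treeP: treeE => _ symE _ _; apply: cut_sym. Qed.

Lemma branch_disjoint c c' y : (c, c') \in E -> branch c c' y -> ~~ branch c' c y.
Proof.
move=> cc' c'y; apply: contra (bridgeE cc'); rewrite /branch cutC => cy.
by apply: connect_trans cy _; rewrite (sym_connect_sym (cut_symE _ _)).
Qed.

Lemma branch_proper c c' c'' : (c, c') \in E -> (c', c'') \in E -> c'' != c ->
  [set y | branch c' c'' y] \proper [set y | branch c c' y].
Proof.
move=> cc' c'c'' c''_c.
have c'_c : c' != c.
  by apply: contraTneq (spanning_tree_adj treeE cc') => ->; rewrite g_irrefl.
have not_c''c' : ~~ connect (erel (cut E c' c'')) c'' c'.
  by rewrite (sym_connect_sym (cut_symE _ _)) bridgeE.
apply/properP; split; last by exists c'; rewrite !inE /branch ?connect0.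
apply/subsetP => y; rewrite !inE /branch => /connectP[p pP ->{y}].
have c'_notin : c' \notin c'' :: p.
  apply: contra not_c''c' => c'_in; move: pP.
  case/splitPl: c'_in => p1 p2 p1L; rewrite cat_path => /andP[p1P _].
  by apply/connectP; exists p1.
have c'c''_cut : erel (cut E c c') c' c''.
  by rewrite /erel !inE !xpair_eqE c'c'' (negbTE c''_c) (negbTE c'_c) !andbF.
apply: connect_trans (connect1 c'c''_cut) _; apply/connectP; exists p => //.
rewrite cutC; apply: path_cut c'_notin _; apply: sub_path pP => a b.
by rewrite /erel !inE => /and3P[].
Qed.

End TreeBranches.

(* [h] plays the role of the distance of G: being 1-Lipschitz along edges, it
   bounds from below the length of every walk. *)
Section StretchLowerBound.
Variables (V : finType) (g : rel V) (h : V -> V -> nat) (t : nat).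
Variables (region : V -> pred V) (long_edge : V -> rel V).
Hypothesis g_irrefl : irreflexive g.
Hypothesis h_refl : forall u, h u u = 0.
Hypothesis h_lipschitz : forall u a w, g u a -> h u w <= (h a w).+1.
Hypothesis long_edge_adj : forall c x y, long_edge c x y -> g x y.
Hypothesis long_edge_long : forall c x y, long_edge c x y -> t <= h x c + h c y.
Hypothesis region_connected : forall c,
  exists2 s, s != c & forall y, region c y -> connect (long_edge c) s y.
Hypothesis region_meet : forall c c', g c c' -> exists2 x, region c x & region c' x.
Hypothesis t_le_card : t <= #|V|.

Variable E : {set V * V}.
Hypothesis treeE : spanning_tree g E.

Lemma h_path_le u p : path (erel E) u p -> h u (last u p) <= size p.
Proof.
elim: p u => [|a p IHp] u /=; first by rewrite h_refl.
case/andP => ua /IHp a_le.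
by apply: leq_trans (h_lipschitz _ (spanning_tree_adj treeE ua)) _.
Qed.

Section ShortTree.
Hypothesis short : forall x y, g x y -> dist E x y < t.

Lemma branch_long_edge c c' x y :
  long_edge c x y -> branch E c c' x -> branch E c c' y.
Proof.
move=> xy; apply: contraLR => y_branch; apply/negP => x_branch.
have := short (long_edge_adj xy); rewrite ltnNge => /negP; apply.
apply: dist_ge => // k lt_kt; apply/negP => /walk_lenP[p [pS pP pL]].
case c_p: (c \in x :: p).
  move: pP pL pS; case/splitPl: c_p => p1 p2 p1L.
  rewrite cat_path last_cat p1L size_cat => /andP[p1P p2P] p2L pS.
  have := h_path_le p1P; have := h_path_le p2P.
  by rewrite p1L p2L; have := long_edge_long xy; lia.
case/negP: y_branch; rewrite -pL; apply: connect_trans x_branch _.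
by apply/connectP; exists p => //; apply: path_cut (negbT c_p) pP.
Qed.

Lemma region_sub_branch c :
  exists2 c', (c, c') \in E & forall y, region c y -> branch E c c' y.
Proof.
have [s s_c s_long] := region_connected c.
case/spanning_treeP: treeE => _ _ connE _; case/connectP: (connE c s) => p pP pL.
case/shortenP: pP pL => [[|c' q]] /=; first by move=> _ _ _ sc; rewrite sc eqxx in s_c.
case/andP=> cc' qP /andP[c_q _] _ sL; exists c' => // y /s_long/connectP[r rP ->].
have : branch E c c' s by rewrite sL; apply/connectP; exists q => //; apply: path_cut.
elim: r s {s_c s_long sL} rP => [|z r IHr] s //= /andP[sz rP] s_branch.
by apply: IHr rP _; apply: branch_long_edge sz s_branch.
Qed.

Lemma short_tree_absurd (v0 : V) : False.
Proof.
pose P (a : V * V) := (a \in E) && [forall y, region a.1 y ==> branch E a.1 a.2 y].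
have P_arc c c' :
    (c, c') \in E -> (forall y, region c y -> branch E c c' y) -> P (c, c').
  by move=> cc' sub; rewrite /P cc'; apply/forallP => y; apply/implyP/sub.
have [c0 v0c0 sub0] := region_sub_branch v0.
pose branch_size (a : V * V) := #|[set y | branch E a.1 a.2 y]|.
case: (arg_minnP branch_size (P_arc _ _ v0c0 sub0)).
move=> [c c'] /andP[cc' /forallP /= sub] minimal.
have [c'' c'c'' sub'] := region_sub_branch c'.
case: (eqVneq c'' c) => [eq_c''c | c''_c].
  have [x xc xc'] := region_meet (spanning_tree_adj treeE cc').
  rewrite eq_c''c in sub'; have := branch_disjoint treeE cc' (implyP (sub x) xc).
  by rewrite sub'.
have := minimal _ (P_arc _ _ c'c'' sub'); rewrite leqNgt => /negP; apply.
by apply: proper_card; apply: branch_proper.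
Qed.

End ShortTree.

Lemma stretch_lower_bound : t <= stretch g E.
Proof.
case: (pickP (@predT V)) => [v0 _|V0]; last first.
  by move: t_le_card; rewrite (eq_card0 V0) leqn0 => /eqP->.
rewrite leqNgt; apply/negP => lt_stretch; apply: (short_tree_absurd _ v0) => x y xy.
by apply: leq_ltn_trans lt_stretch; apply: (leq_bigmax_cond (x, y)).
Qed.

End StretchLowerBound.

Section ParentEdges.
Variables (V : finType) (g : rel V) (parent : V -> V) (pot : V -> nat).
Hypothesis g_sym : symmetric g.
Hypothesis parent_adj : forall x, x != parent x -> g x (parent x).
Hypothesis pot_parent : forall x, x != parent x -> pot (parent x) < pot x.

Definition parent_edges : {set V * V} :=
  [set a | (a.1 != a.2) && ((a.2 == parent a.1) || (a.1 == parent a.2))].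

Lemma parent_edges_sym u v : (u, v) \in parent_edges -> (v, u) \in parent_edges.
Proof. by rewrite !inE /= eq_sym orbC. Qed.

Lemma pot_iter_parent m x : pot (iter m parent x) <= pot x.
Proof.
elim: m => //= m; apply: leq_trans; set y := iter m parent x.
by case: (eqVneq y (parent y)) => [<- // | /pot_parent/ltnW].
Qed.

Lemma parent_edge_bridge w : w != parent w ->
  ~~ connect (erel (cut parent_edges w (parent w))) w (parent w).
Proof.
move=> w_root; set R := erel _.
pose below x := exists m, iter m parent x = w.
have below_R a b : R a b -> below a -> below b.
  rewrite /R /erel !inE !xpair_eqE /= => /and3P[_ not_w /andP[_ /orP[] /eqP ab]]; subst.
    case=> [[|m]] /= am; first by rewrite am !eqxx in not_w.
    by exists m; rewrite -iterSr.
  by case=> m bm; exists m.+1; rewrite iterSr.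
have below_path x p : path R x p -> below x -> below (last x p).
  by elim: p x => //= a p IHp x /andP[/below_R xa pR] /xa; apply: IHp.
apply/negP => /connectP[p pR pw]; have [m] := below_path _ _ pR (ex_intro _ 0 erefl).
rewrite -pw => /(congr1 pot); have := pot_iter_parent m (parent w).
by have := pot_parent w_root; lia.
Qed.

Lemma spanning_tree_parent_edges root :
  (forall x, connect (erel parent_edges) x root) -> spanning_tree g parent_edges.
Proof.
have sym_edges : symmetric (erel parent_edges).
  by move=> u v; apply/idP/idP; apply: parent_edges_sym.
move=> to_root; apply/spanning_treeP; split.
- move=> u v; rewrite inE /= => /andP[uv /orP[/eqP vu | /eqP uv']].
    by rewrite vu parent_adj // -vu.
  by rewrite g_sym uv' parent_adj // -uv' eq_sym.
- exact: parent_edges_sym.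
- move=> u v; apply: connect_trans (to_root u) _.
  by rewrite (sym_connect_sym sym_edges).
move=> u v; rewrite inE /= => /andP[uv /orP[/eqP vu | /eqP uv']].
  by rewrite vu parent_edge_bridge // -vu.
rewrite (sym_connect_sym (cut_sym _ _ parent_edges_sym)) cutC uv'.
by rewrite parent_edge_bridge // -uv' eq_sym.
Qed.

End ParentEdges.

Lemma exists_neq2 (T : finType) (a b : T) :
  #|[set a; b]| < #|T| -> exists v, (v != a) && (v != b).
Proof.
move=> lt_ab; apply/existsP; apply: contraLR lt_ab => /existsPn none.
rewrite -leqNgt -cardsT; apply: subset_leq_card; apply/subsetP => v _.
by rewrite !inE; move: (none v); rewrite negb_and !negbK.
Qed.

Section Hamming.
Variables (d : nat) (n : nat -> nat).
Notation V := (hvert d n).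
Implicit Types x y z c w : V.

Definition hamming x y := #|[set i | x i != y i]|.

Lemma hadjE x y : hadj x y = (hamming x y == 1).
Proof. by []. Qed.

Lemma hamming_sym x y : hamming x y = hamming y x.
Proof. by apply: eq_card => i; rewrite !inE eq_sym. Qed.

Lemma hamming_eq0 x y : (hamming x y == 0) = (x == y).
Proof.
rewrite cards_eq0; apply/eqP/eqP => [none | ->].
  by apply/ffunP => i; apply/eqP; move/setP/(_ i): none; rewrite !inE => /negbFE.
by apply/setP => i; rewrite !inE eqxx.
Qed.

Lemma exists_coord_neq x y : x != y -> exists i, x i != y i.
Proof.
by move=> x_y; apply/existsP; apply: contraR x_y => /existsPn same;
  apply/eqP/ffunP => i; apply/eqP/negbNE.
Qed.

Lemma hamming_refl x : hamming x x = 0.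
Proof. by apply/eqP; rewrite hamming_eq0. Qed.

Lemma hamming_triangle x y z : hamming x z <= hamming x y + hamming y z.
Proof.
apply: leq_trans (leq_of_leqif (leq_card_setU _ _)).
apply: subset_leq_card; apply/subsetP => i; rewrite !inE => xz.
by case: (eqVneq (x i) (y i)) => [xy|//]; rewrite -xy xz orbT.
Qed.

Lemma hamming_le_dim x y : hamming x y <= d.
Proof. by rewrite -[d]card_ord max_card. Qed.

Lemma hadj_irrefl : irreflexive (@hadj d n).
Proof. by move=> x; rewrite hadjE hamming_refl. Qed.

Lemma hadj_sym : symmetric (@hadj d n).
Proof. by move=> x y; rewrite !hadjE hamming_sym. Qed.

Lemma hamming_lipschitz x a w : hadj x a -> hamming x w <= (hamming a w).+1.
Proof.
by rewrite hadjE => /eqP xa; apply: leq_trans (hamming_triangle x a w) _; rewrite xa.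
Qed.

Definition far c x := [forall i, x i != c i].

Lemma far_hamming c x : far c x = (hamming x c == d).
Proof.
have -> : far c x = ([set i | x i != c i] == setT).
  apply/forallP/eqP => [neq | /setP all_in i]; last by have := all_in i; rewrite !inE.
  by apply/setP => i; rewrite !inE neq.
by rewrite eqEcard subsetT cardsT card_ord eqn_leq hamming_le_dim.
Qed.

Definition upd x y i : V := [ffun j => if j == i then y j else x j].

Lemma hamming_upd x y i c :
  hamming (upd x y i) c = #|[set j | j != i & x j != c j]| + (y i != c i).
Proof.
rewrite /hamming (cardsD1 i) [_ + _]addnC !inE ffunE eqxx; congr (_ + _).
by apply: eq_card => j; rewrite !inE ffunE; case: eqP.
Qed.

Lemma hadj_upd x y i : x i != y i -> hadj x (upd x y i).
Proof.
move=> xy; rewrite hadjE; apply/cards1P; exists i; apply/setP => j.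
by rewrite !inE ffunE; case: (eqVneq j i) => [->|]; rewrite ?eqxx.
Qed.

Lemma hamming_upd_lt x y i : x i != y i -> hamming (upd x y i) y < hamming x y.
Proof.
move=> xy; rewrite hamming_upd eqxx addn0 [hamming x y](cardsD1 i) !inE xy.
by apply: eq_leq; congr (_.+1); apply: eq_card => j; rewrite !inE.
Qed.

Lemma hamming_upd_succ y w c i : y i = c i -> w i != c i ->
  hamming (upd y w i) c = (hamming y c).+1.
Proof.
move=> yc wc; rewrite hamming_upd wc addn1 [hamming y c](cardsD1 i) !inE yc eqxx.
by congr (_.+1); apply: eq_card => j; rewrite !inE.
Qed.

Lemma far_upd c x y i : far c x -> far c y -> far c (upd x y i).
Proof.
by move=> /forallP cx /forallP cy; apply/forallP => j; rewrite ffunE; case: ifP.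
Qed.

Lemma far_connect c (R : rel V) :
  (forall a b, hadj a b -> far c a -> far c b -> R a b) ->
  forall x y, far c x -> far c y -> connect R x y.
Proof.
move=> adjR x y; elim: {x}(hamming x y) {-2}x (leqnn (hamming x y)) => [|m IHm] x.
  by rewrite leqn0 hamming_eq0 => /eqP-> _ _.
case: (eqVneq x y) => [-> _ _ _ | x_y le_m cx cy]; first exact: connect0.
have [i xy] := exists_coord_neq x_y.
have cz := far_upd i cx cy.
apply: connect_trans (connect1 (adjR _ _ (hadj_upd xy) cx cz)) (IHm _ _ cz cy).
by rewrite -ltnS; apply: leq_trans (hamming_upd_lt xy) le_m.
Qed.

Definition antipode c c' : V :=
  [ffun i => odflt (c i) [pick v | (v != c i) && (v != c' i)]].

Lemma far_antipode c c' : (forall i : 'I_d, #|[set c i; c' i]| < n i) ->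
  far c (antipode c c') && far c' (antipode c c').
Proof.
move=> small; have avoid i : (antipode c c' i != c i) && (antipode c c' i != c' i).
  rewrite ffunE; case: pickP => [v -> // | none].
  have [|v cv] := @exists_neq2 _ (c i) (c' i); first by rewrite card_ord small.
  by rewrite none in cv.
by apply/andP; split; apply/forallP => i; case/andP: (avoid i).
Qed.

Lemma card_hvert : #|V| = \prod_(i < d) n i.
Proof.
rewrite card_dep_ffun foldrE big_map big_enum.
by apply: eq_bigr => i _; rewrite card_ord.
Qed.

Lemma double_dim_le_card : (forall i : 'I_d, 1 < n i) -> 2 * d <= #|V|.
Proof.
move=> n_gt1; rewrite card_hvert.
apply: leq_trans (leq_prod (E1 := fun=> 2) (fun i _ => n_gt1 i)).
rewrite prod_nat_const card_ord.
by case: (d) => // k; rewrite expnS leq_mul2l ltn_expl.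
Qed.

Lemma far_neq c x : 0 < d -> far c x -> x != c.
Proof.
by move=> d_gt0; rewrite far_hamming -hamming_eq0 => /eqP->; rewrite -lt0n.
Qed.

Definition far_edge c a b := [&& hadj a b, far c a & far c b].
Definition far_near_edge c a b := [&& hadj a b, far c a & d.-1 <= hamming b c].

Lemma far_near_connect c s y : far c s -> d.-1 <= hamming y c ->
  connect (far_near_edge c) s y.
Proof.
have far_near a b : hadj a b -> far c a -> far c b -> far_near_edge c a b.
  move=> ab ca; rewrite far_hamming => /eqP cb.
  by rewrite /far_near_edge ab ca cb leq_pred.
move=> cs; case cy: (far c y) => y_near; first exact: far_connect far_near _ _ cs cy.
have [i yc] : exists i, y i = c i.
  by move/negbT: cy => /forallPn[i /negbNE/eqP]; exists i.
set z := upd y s i; have si : s i != c i by apply: (forallP cs).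
have cz : far c z.
  rewrite far_hamming hamming_upd_succ //; have := hamming_le_dim z c.
  rewrite hamming_upd_succ //; move/negbT: cy; rewrite far_hamming.
  by move: y_near; lia.
apply: connect_trans (far_connect far_near cs cz) (connect1 _).
by rewrite /far_near_edge hadj_sym hadj_upd ?yc 1?eq_sym // cz.
Qed.

Section LowerBounds.
Hypothesis d_gt0 : 0 < d.
Variable E : {set V * V}.
Hypothesis treeE : spanning_tree (@hadj d n) E.

Lemma stretch_hadj_ge_double_pred :
  (forall i : 'I_d, 1 < n i) -> 2 * d - 1 <= stretch (@hadj d n) E.
Proof.
move=> n_gt1; have far_antipode1 c : far c (antipode c c).
  have small i : #|[set c i; c i]| < n i by rewrite cards2 eqxx n_gt1.
  by case/andP: (far_antipode small).
apply: (@stretch_lower_bound _ _ hamming _ (fun c x => d.-1 <= hamming x c)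
  far_near_edge hadj_irrefl hamming_refl hamming_lipschitz) treeE.
- by move=> c x y /and3P[].
- move=> c x y /and3P[_ + yc]; rewrite far_hamming [hamming c y]hamming_sym => /eqP->.
  by lia.
- move=> c; exists (antipode c c); first exact: far_neq.
  by move=> y; apply: far_near_connect.
- move=> c c' cc'; have := far_antipode1 c; rewrite far_hamming => /eqP xc.
  have c'c : hamming c' c = 1 by apply/eqP; rewrite -hadjE hadj_sym.
  exists (antipode c c); first by rewrite xc leq_pred.
  by have := hamming_triangle (antipode c c) c' c; rewrite xc c'c; lia.
- by apply: leq_trans (double_dim_le_card n_gt1); lia.
Qed.

Lemma stretch_hadj_ge_double :
  (forall i : 'I_d, 2 < n i) -> 2 * d <= stretch (@hadj d n) E.
Proof.
move=> n_gt2; have far_antipode2 c c' : far c (antipode c c') && far c' (antipode c c').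
  by apply: far_antipode => i; rewrite cards2; apply: leq_trans (n_gt2 i); case: eqP.
apply: (@stretch_lower_bound _ _ hamming _ far far_edge hadj_irrefl hamming_refl
  hamming_lipschitz) treeE.
- by move=> c x y /and3P[].
- move=> c x y /and3P[_]; rewrite !far_hamming [hamming c y]hamming_sym.
  by move=> /eqP-> /eqP->; lia.
- move=> c; have /andP[c_antipode _] := far_antipode2 c c.
  exists (antipode c c); first exact: far_neq.
  by move=> y; apply: far_connect c_antipode => a b ab ca cb; rewrite /far_edge ab ca.
- by move=> c c' _; exists (antipode c c'); case/andP: (far_antipode2 c c').
- by apply: double_dim_le_card => i; apply: ltnW.
Qed.

End LowerBounds.

End Hamming.

Section HammingTree.
Variables (d : nat) (n : nat -> nat) (r : hvert d n).
Notation V := (hvert d n).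
Implicit Types x y : V.

Definition trunc j x : V := [ffun i : 'I_d => if i < j then x i else r i].

Definition hparent x : V :=
  [ffun i : 'I_d => if [exists j : 'I_d, (i < j) && (x j != r j)] then x i else r i].

Notation E := (parent_edges hparent).

Lemma hparent_trunc (j : 'I_d) x : x j != r j -> hparent (trunc j.+1 x) = trunc j x.
Proof.
move=> xj; apply/ffunP => i; rewrite !ffunE; case: (ltnP i j) => [lt_ij | le_ji].
  rewrite ltnW //; case: existsP => // -[]; exists j.
  by rewrite lt_ij ffunE ltnSn.
case: existsP => // -[l /andP[lt_il]].
by rewrite ffunE ltnS leqNgt (leq_ltn_trans le_ji lt_il) eqxx.
Qed.

Lemma walk_trunc_succ (j : 'I_d) x :
  walk_len E (x j != r j) (trunc j.+1 x) (trunc j x).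
Proof.
case: (eqVneq (x j) (r j)) => [xj | xj] /=.
  suff -> : trunc j.+1 x = trunc j x by apply: walk_len0.
  apply/ffunP => i; rewrite !ffunE ltnS leq_eqVlt.
  by case: ltngtP => // /val_inj ->.
apply: walk_len1; rewrite inE /= hparent_trunc // eqxx andbT.
by apply: contra xj => /eqP/ffunP/(_ j); rewrite !ffunE ltnSn ltnn => ->.
Qed.

Lemma walk_trunc m x : m <= d -> exists2 L, L <= m & walk_len E L x (trunc (d - m) x).
Proof.
elim: m => [_ | m IHm lt_md].
  have -> : trunc (d - 0) x = x by apply/ffunP => i; rewrite ffunE subn0 ltn_ord.
  by exists 0; last exact: walk_len0.
have [L le_Lm xL] := IHm (ltnW lt_md).
have lt_jd : d - m.+1 < d by lia.
pose j := Ordinal lt_jd; have := walk_trunc_succ j x; rewrite /= -subSn // subSS.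
by move=> step; exists (L + (x j != r j)); [lia | exact: walk_len_cat xL step].
Qed.

Lemma hparent_neq x i : x i != hparent x i ->
  ~~ [exists j : 'I_d, (i < j) && (x j != r j)] && (x i != r i).
Proof. by rewrite ffunE; case: ifP; rewrite ?eqxx. Qed.

Lemma hadj_hparent x : x != hparent x -> hadj x (hparent x).
Proof.
move=> x_root; have [i0 xi0] := exists_coord_neq x_root.
rewrite hadjE; apply/cards1P; exists i0; apply/setP => i; rewrite !inE.
apply/idP/eqP => [xi | -> //]; apply: val_inj.
case/andP: (hparent_neq xi) => /existsPn above_i xi_r.
case/andP: (hparent_neq xi0) => /existsPn above_i0 xi0_r.
case: (ltngtP i i0) => // [lt_i_i0 | lt_i0_i].
  by have := above_i i0; rewrite lt_i_i0 xi0_r.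
by have := above_i0 i; rewrite lt_i0_i xi_r.
Qed.

Lemma hamming_hparent_lt x : x != hparent x -> hamming (hparent x) r < hamming x r.
Proof.
move=> x_root; apply: (proper_card (A := [set i | _]) (B := [set i | _])).
apply/properP; split.
  by apply/subsetP => i; rewrite !inE ffunE; case: ifP; rewrite ?eqxx.
have [i xi] := exists_coord_neq x_root.
case/andP: (hparent_neq xi) => /negbTE above xr.
by exists i; rewrite !inE ?ffunE ?above ?eqxx.
Qed.

Lemma spanning_tree_hparent : spanning_tree (@hadj d n) E.
Proof.
apply: (spanning_tree_parent_edges (root := r) (@hadj_sym d n) hadj_hparent
  hamming_hparent_lt) => x.
have [L _] := walk_trunc x (leqnn d); rewrite subnn.
suff -> : trunc 0 x = r by apply: walk_len_connect.
by apply/ffunP => i; rewrite ffunE.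
Qed.

Lemma dist_hparent_hadj x y : hadj x y -> exists2 k : 'I_d, x k != y k &
  dist E x y <= 2 * (d - k.+1) + (x k != r k) + (y k != r k).
Proof.
rewrite hadjE => /cards1P[k /setP xy_k].
exists k; first by have := xy_k k; rewrite !inE eqxx.
have trunc_xy : trunc k x = trunc k y.
  apply/ffunP => i; rewrite !ffunE; case: ifP => // lt_ik; apply/eqP/negbNE.
  by have := xy_k i; rewrite !inE => ->; apply: contraTneq lt_ik => ->; rewrite ltnn.
have [L1 le_L1] := walk_trunc x (leq_subr k.+1 d).
have [L2 le_L2] := walk_trunc y (leq_subr k.+1 d).
rewrite subKn ?ltn_ord // => yL2 xL1.
have := walk_len_sym (@parent_edges_sym _ _) (walk_len_cat yL2 (walk_trunc_succ k y)).
rewrite -trunc_xy => /(walk_len_cat (walk_len_cat xL1 (walk_trunc_succ k x))).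
by move=> /dist_le /leq_trans; apply; lia.
Qed.

Lemma stretch_hparent_le :
  stretch (@hadj d n) E <= (if n 0 == 2 then 2 * d - 1 else 2 * d).
Proof.
apply/bigmax_leqP => -[x y] /= /dist_hparent_hadj[k xy_k] /leq_trans; apply.
have lt_kd := ltn_ord k; case: ifP => [/eqP n0 | _]; last by lia.
case: (posnP k) => [k0 | ]; last by lia.
have nk : n k = 2 by rewrite k0.
have bin (z : V) : (z k : nat) < 2 by rewrite -nk.
move: xy_k (bin x) (bin y) (bin r); rewrite -!val_eqE /=.
case: (x k) (y k) (r k) => [a _] [b _] [c _] /=; lia.
Qed.

End HammingTree.

Theorem theorem3p2 (d : nat) (n : nat -> nat)
  (hd : 1 <= d)
  (hn2 : forall i, i < d -> 2 <= n i)
  (hmono : forall i j, i <= j -> j < d -> n i <= n j) :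
  tree_stretch (@hadj d n) = (if n 0 == 2 then 2 * d - 1 else 2 * d).
Proof.
have n_gt1 (i : 'I_d) : 1 < n i by apply: hn2.
pose r : hvert d n := [ffun i => Ordinal (ltnW (n_gt1 i))].
apply/eqP; rewrite eqn_leq; apply/andP; split.
  exact: leq_trans (tree_stretch_le (spanning_tree_hparent r)) (stretch_hparent_le r).
apply: tree_stretch_ge => [|E treeE].
  by apply: leq_trans (double_dim_le_card n_gt1); case: ifP; lia.
case: ifP => [_ | /negbT n0]; first exact: stretch_hadj_ge_double_pred.
apply: stretch_hadj_ge_double => // i.
by have := hmono 0 i isT (ltn_ord i); have := hn2 0 hd; lia.
Qed.
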